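(* Let $G\in T_{n,m}$ be a two-terminal graph such that the edge $st$ is not in $G$, let $e$ be any edge of $G$, and let $d$ be any positive integer. Then the two-terminal graph $G-e+st$ is $d$-stronger than $G$.
   Context: All graphs are finite, simple and undirected. A two-terminal graph is a graph $G$ together with two distinguished vertices $s,t$ (the terminals). $T_{n,m}$ denotes the set of all pairwise nonisomorphic (with isomorphisms preserving the set of terminals) two-terminal graphs with $n$ vertices and $m$ edges. For a positive integer $d$, a $d$-pathset of a two-terminal graph $G$ is a spanning subgraph of $G$ containing a path of length (number of edges) at most $d$ joining $s$ and $t$; $N_i^d(G)$ is the number of $d$-pathsets of $G$ with exactly $i$ edges. For $G,H\in T_{n,m}$, $G$ is $d$-stronger than $H$ if $N_i^d(G)\geq N_i^d(H)$ for every $i\in\{1,\ldots,m\}$ and $N_j^d(G)>N_j^d(H)$ for some $j\in\{1,\ldots,m\}$. $G-e+st$ denotes the graph obtained from $G$ by deleting edge $e$ and adding the edge $st$. *)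

From mathcomp Require Import all_boot.
Set Implicit Arguments. Unset Strict Implicit. Unset Printing Implicit Defensive.

(* A simple graph on the finite vertex type T is given by its edge set
   E : {set {set T}}, each edge being a 2-element set of vertices. *)
Definition simple_edges (T : finType) (E : {set {set T}}) : Prop :=
  forall x, x \in E -> #|x| = 2.

Definition edge (T : finType) (u v : T) : {set T} := [set u; v].

Definition has_short_path (T : finType) (F : {set {set T}}) (s t : T) (d : nat)
  : bool :=
  [exists k : 'I_d.+1, exists p : k.-tuple T,
     [&& path (fun x y => edge x y \in F) s p,
         last s p == t & uniq (s :: p)]].

(* N_i^d(G): number of d-pathsets (spanning subgraphs, i.e. edge subsets,
   containing an s-t path of length at most d) with exactly i edges. *)
Definition N (T : finType) (E : {set {set T}}) (s t : T) (d i : nat) : nat :=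
  #|[set F in powerset E | (#|F| == i) && has_short_path F s t d]|.

Definition d_stronger (T : finType) (E' E : {set {set T}}) (s t : T) (d : nat)
  : Prop :=
  let m := #|E| in
  (forall i, 1 <= i <= m -> N E s t d i <= N E' s t d i) /\
  (exists2 j, 1 <= j <= m & N E s t d j < N E' s t d j).

Definition swap_edge (T : finType) (E : {set {set T}}) (e : {set T}) (s t : T)
  : {set {set T}} := (E :\ e) :|: [set edge s t].

From mathcomp Require Import all_boot.

Set Implicit Arguments.
Unset Strict Implicit.
Unset Printing Implicit Defensive.

(* Send every edge set F of G to F - e + st if e is in F, and to F otherwise.
   Since st is not an edge of G, this map is injective on the edge subsets of
   G and preserves their size; it also preserves d-pathsets, because a set it
   changes contains the one-edge path st. Hence N_i^d(G) <= N_i^d(G - e + st)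
   for every i. The inequality is strict for i = 1: the only one-edge
   d-pathset is {st}, which lies in G - e + st but not in G. *)

Lemma has_short_path_edge (T : finType) (F : {set {set T}}) s t d :
  0 < d -> s != t -> edge s t \in F -> has_short_path F s t d.
Proof.
move=> d_gt0 neq_st stF; apply/existsP; exists (Ordinal (d_gt0 : 1 < d.+1)).
by apply/existsP; exists [tuple t]; rewrite /= stF eqxx inE neq_st.
Qed.

Lemma has_short_path1 (T : finType) (f : {set T}) s t d :
  s != t -> has_short_path [set f] s t d -> f = edge s t.
Proof.
move=> neq_st /existsP[_ /existsP[[p _] /and3P[]]] /=.
case: p => [|x [|y q]] /=.
- by move=> _ /eqP eq_ts; rewrite eq_ts eqxx in neq_st.
- by rewrite inE andbT => /eqP <- /eqP ->.
- rewrite !inE => /and3P[/eqP fsx /eqP fxy _] _ /and3P[sNp /norP[neq_xy _] _].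
  have : y \in edge s x by rewrite fsx -fxy !inE eqxx orbT.
  rewrite !inE [y == x]eq_sym (negbTE neq_xy) orbF => /eqP eq_ys.
  by rewrite eq_ys eqxx orbT in sNp.
Qed.

Section Exchange.

Variable T : finType.
Implicit Types (x y : T) (A F : {set T}).

Definition exchange x y F := if x \in F then F :\ x :|: [set y] else F.

Lemma exchangeK x y F : y \notin F -> exchange y x (exchange x y F) = F.
Proof.
move=> yNF; rewrite /exchange.
have [xF|xNF] := boolP (x \in F); last by rewrite (negbTE yNF).
rewrite in_setU set11 orbT setDUl setDv setU0 (setDidPl _); last first.
  by rewrite disjoint_sym disjoints1 inE negb_and yNF orbT.
by rewrite setUC setD1K.
Qed.

Lemma card_exchange x y F : y \notin F -> #|exchange x y F| = #|F|.
Proof.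
rewrite /exchange => yNF; case: ifP => // xF.
by rewrite setUC cardsU1 in_setD1 (negbTE yNF) andbF (cardsD1 x F) xF.
Qed.

Lemma exchange_sub x y A F : F \subset A -> exchange x y F \subset A :\ x :|: [set y].
Proof.
rewrite /exchange => sFA; case: ifP => xF; first by rewrite setSU // setSD.
apply/subsetP => z zF; rewrite !inE (subsetP sFA z zF) andbT.
by apply/orP; left; apply: contraFneq xF => <-.
Qed.

Lemma mem_exchange x y F : x \in F -> y \in exchange x y F.
Proof. by rewrite /exchange => ->; rewrite !inE eqxx orbT. Qed.

End Exchange.

Lemma leq_N_swap (T : finType) (E : {set {set T}}) (s t : T) (e : {set T}) d i :
  0 < d -> s != t -> edge s t \notin E -> N E s t d i <= N (swap_edge E e s t) s t d i.
Proof.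
move=> d_gt0 neq_st stNE.
have stNF (F : {set {set T}}) : F \subset E -> edge s t \notin F.
  by move=> sFE; apply: contraNN stNE; apply: (subsetP sFE).
rewrite /N -(card_in_imset (f := exchange e (edge s t))); last first.
  apply: (can_in_inj (g := exchange (edge s t) e)) => F.
  by rewrite !inE => /andP[/stNF/exchangeK].
apply: subset_leq_card; apply/subsetP => _ /imsetP[F + ->].
rewrite !inE => /and3P[sFE /eqP <- pathF].
rewrite exchange_sub // card_exchange ?stNF // eqxx /=.
have [eF|eNF] := boolP (e \in F); last by rewrite /exchange (negbTE eNF).
exact/has_short_path_edge/mem_exchange.
Qed.

Lemma N1_eq0 (T : finType) (E : {set {set T}}) (s t : T) d :
  s != t -> edge s t \notin E -> N E s t d 1 = 0.
Proof.
move=> neq_st stNE; apply/eqP; rewrite cards_eq0; apply/eqP/setP => F.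
rewrite !inE; apply/negbTE/negP => /and3P[sFE /cards1P[f eq_Ff] pathF].
move: sFE pathF; rewrite eq_Ff sub1set => fE /(has_short_path1 neq_st) eq_f.
by rewrite -eq_f fE in stNE.
Qed.

Lemma N1_gt0 (T : finType) (E : {set {set T}}) (s t : T) d :
  0 < d -> s != t -> edge s t \in E -> 0 < N E s t d 1.
Proof.
move=> d_gt0 neq_st stE; apply/card_gt0P; exists [set edge s t].
by rewrite !inE sub1set stE cards1 eqxx has_short_path_edge ?set11.
Qed.

Theorem lemma5 (T : finType) (E : {set {set T}}) (s t : T) (e : {set T}) (d : nat) :
  simple_edges E -> s != t -> edge s t \notin E -> e \in E -> 0 < d ->
  d_stronger (swap_edge E e s t) E s t d.
Proof.
move=> _ neq_st stNE eE d_gt0; split.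
  by move=> i _; apply: leq_N_swap.
exists 1; first by rewrite /= card_gt0; apply/set0Pn; exists e.
by rewrite N1_eq0 // N1_gt0 // /swap_edge !inE eqxx orbT.
Qed.
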